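(* Let $q > 0$ and let $m \geq 1$ be an integer. Then \[ \sum_{n=m}^{\lfloor m^2/q \rfloor} \Phi_{n,m}^2 \leq 4\, \frac{m^2}{q}\, e^{-q}. \]
   Context: For integers $n \ge m \ge 1$, $\Phi_{n,m} := \min_{p \in \Pi_m} \max_{|x| \leq 1} |x^n - p(x)|$, where $\Pi_m$ is the set of polynomials with real coefficients of degree at most $m$ and the maximum is over real $x \in [-1,1]$. An empty sum is zero. *)

From HB Require Import structures.
From mathcomp Require Import all_boot all_order all_algebra.
From mathcomp Require Import all_classical all_reals all_analysis.
Set Implicit Arguments. Unset Strict Implicit. Unset Printing Implicit Defensive.
Import Order.TTheory GRing.Theory Num.Theory.
Local Open Scope classical_set_scope.
Local Open Scope ring_scope.

Definition unif_err {R : realType} (n : nat) (p : {poly R}) : R :=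
  sup [set y : R | exists x : R, -1 <= x <= 1 /\ y = `|x ^+ n - p.[x]|].

(* Phi_{n,m} = min over real polynomials p of degree <= m of unif_err n p
   (degree <= m  <->  size p <= m.+1; the min is attained, so it equals the inf) *)
Definition Phi {R : realType} (n m : nat) : R :=
  inf [set e : R | exists p : {poly R}, (size p <= m.+1)%N /\ e = unif_err n p].

From HB Require Import structures.
From mathcomp Require Import all_boot all_order all_algebra.
From mathcomp Require Import all_classical all_reals all_analysis.
From mathcomp Require Import ring lra zify.
Import Order.TTheory GRing.Theory Num.Theory numFieldNormedType.Exports.
Local Open Scope classical_set_scope.
Local Open Scope ring_scope.

(* Expanding (2x)^n in Chebyshev polynomials gives
   x^n = 2^-n \sum_k C(n, k) T_|n - 2k|(x).  Dropping the terms with |n - 2k| > m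
   leaves a polynomial of degree at most m, and since |T_j| <= 1 on [-1, 1] the
   error is at most the binomial tail 2^-n \sum_(|n - 2k| > m) C(n, k).  A Chernoff
   bound, using cosh l <= exp (l^2 / 2) with l = m / n, bounds this tail by
   2 exp (- m^2 / (2n)).  Hence Phi_{n,m}^2 <= 4 exp (- m^2 / n) <= 4 exp (- q)
   whenever n <= m^2 / q, and at most m^2 / q indices n contribute. *)

Section MonomialApproximation.
Variable R : realType.
Implicit Types t x : R.

Lemma is_derive_ge0_le (f df : R -> R) (a b : R) :
  (forall x, is_derive x 1 f (df x)) -> (forall x, a <= x <= b -> 0 <= df x) ->
  a <= b -> f a <= f b.
Proof.
move=> f_df df_ge0 ab.
have f_cont : {within `[a, b], continuous f}.
  apply: continuous_subspaceT => x.
  exact/differentiable_continuous/derivable1_diffP/(@ex_derive _ _ _ _ _ _ _ (f_df x)).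
rewrite -subr_ge0; have [c c_ab ->] := MVT_segment ab (fun x _ => f_df x) f_cont.
rewrite mulr_ge0 ?subr_ge0 // df_ge0 // -in_itv.
Qed.

Lemma is_derive_expRN x : is_derive x 1 (fun t => expR (- t)) (- expR (- x)).
Proof.
have := is_derive1_comp (is_derive_expR (- x)) (is_deriveNid x 1).
by rewrite mulrN1.
Qed.

Lemma expR_sub_expRN_le t : 0 <= t ->
  expR t - expR (- t) <= t * (expR t + expR (- t)).
Proof.
move=> t_ge0; rewrite -subr_ge0.
pose f := fun s : R => s * (expR s + expR (- s)) - (expR s - expR (- s)).
have -> : 0 = f 0 by rewrite /f mul0r oppr0 expR0 subrr subr0.
apply: (@is_derive_ge0_le f (fun s => s * (expR s - expR (- s)))) => // [x|x /andP[x_ge0 _]].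
- have dcosh := is_deriveD (is_derive_expR x) (is_derive_expRN x).
  have dsinh := is_deriveB (is_derive_expR x) (is_derive_expRN x).
  apply: is_derive_eq (is_deriveB (is_deriveM (is_derive_id x 1) dcosh) dsinh) _.
  rewrite /= !scaler1 -[x *: _]/(x * _) -[(expR + _) x]/(expR x + expR (- x)).
  ring.
- by rewrite mulr_ge0 // subr_ge0 ler_expR; lra.
Qed.

Lemma expR_add_expRN_le t : expR t + expR (- t) <= 2 * expR (t ^+ 2 / 2).
Proof.
wlog t_ge0 : t / 0 <= t.
  move=> nonneg; have [/nonneg //|/ltW] := leP 0 t.
  by rewrite -oppr_ge0 => /nonneg; rewrite opprK sqrrN addrC.
pose g := fun s : R => expR (- s ^+ 2 / 2) * (expR s + expR (- s)).
suff : g t <= g 0.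
  rewrite /g expr0n /= oppr0 mul0r !expR0 mul1r.
  by rewrite -ler_pdivlMl ?expR_gt0 // -expRN mulNr opprK; lra.
rewrite -lerN2.
apply: (@is_derive_ge0_le (- g) (fun s => expR (- s ^+ 2 / 2) *
    (s * (expR s + expR (- s)) - (expR s - expR (- s))))) => // [x|x /andP[x_ge0 _]].
- have dcosh := is_deriveD (is_derive_expR x) (is_derive_expRN x).
  have dsqr := is_deriveZ (-1 / 2) (is_deriveX 2 (is_derive_id x 1)).
  have dgauss := is_derive1_comp (is_derive_expR _) dsqr.
  have -> : - g = - ((expR \o (-1 / 2 *: id ^+ 2)) * (expR + fun s => expR (- s))).
    apply/funext => s; rewrite /g !fctE -[_ *: _]/(_ * _).
    by congr (- (expR _ * _)); ring.
  apply: is_derive_eq (is_deriveN (is_deriveM dgauss dcosh)) _.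
  rewrite !fctE /= -![_ *: _]/(_ * _) /GRing.scale /=.
  have -> : -1 / 2 * x ^+ 2 = - x ^+ 2 / 2 :> R by ring.
  by field.
- by rewrite mulr_ge0 ?expR_ge0 // subr_ge0 expR_sub_expRN_le.
Qed.

Lemma binomial_expR_sum (l : R) n :
  \sum_(k < n.+1) 'C(n, k)%:R * expR (l * (n%:R - 2 * k%:R)) =
  (expR l + expR (- l)) ^+ n.
Proof.
rewrite exprDn; apply: eq_bigr => k _.
rewrite -[RHS]mulr_natl -!expRM_natl -expRD natrB; last by rewrite -ltnS.
by congr (_ * expR _); ring.
Qed.

Lemma natr_absz_subn_double n k :
  (`|n%:Z - (2 * k)%:Z|%N)%:R = `|n%:R - 2 * k%:R| :> R.
Proof. by rewrite natr_absz intr_norm intrB -[((2 * k)%N)%:~R]/((2 * k)%:R) natrM. Qed.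

Lemma one_le_expR_add_expR (l d c : R) : 0 <= l -> c <= `|d| ->
  1 <= expR (l * d - l * c) + expR (- (l * d) - l * c).
Proof.
move=> l_ge0; rewrite ler_normr => /orP[] c_le.
- rewrite -[leLHS]addr0 lerD ?expR_ge0 //.
  by rewrite -expR0 ler_expR -mulrBr mulr_ge0 ?subr_ge0.
- rewrite -[leLHS]add0r lerD ?expR_ge0 //.
  by rewrite -expR0 ler_expR -mulrN -mulrBr mulr_ge0 ?subr_ge0.
Qed.

Lemma binomial_tail_le_expR (l : R) n m : 0 <= l ->
  \sum_(k < n.+1 | (m < `|n%:Z - (2 * k)%:Z|)%N) ('C(n, k)%:R : R) <=
  2 * expR (- (l * m%:R)) * (expR l + expR (- l)) ^+ n.
Proof.
move=> l_ge0.
(* Chernoff: w k >= 1 on the tail, and \sum_k C(n, k) w k is a sum of two binomial expansions. *)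
pose w k := expR (l * (n%:R - 2 * k%:R) - l * m%:R) +
            expR (- (l * (n%:R - 2 * k%:R)) - l * m%:R).
apply: (@le_trans _ _ (\sum_(k < n.+1) 'C(n, k)%:R * w k)).
  rewrite [leRHS](bigID (fun k : 'I_n.+1 => m < `|n%:Z - (2 * k)%:Z|)%N) /=.
  rewrite -[leLHS]addr0; apply: lerD; last first.
    by apply: sumr_ge0 => k _; rewrite mulr_ge0 ?addr_ge0 ?expR_ge0.
  apply: ler_sum => k far_k; rewrite -[leLHS]mulr1 ler_wpM2l //.
  by rewrite one_le_expR_add_expR // -natr_absz_subn_double ler_nat ltnW.
have cosh_even : expR (- l) + expR (- - l) = expR l + expR (- l).
  by rewrite opprK addrC.
rewrite [leLHS](_ : _ = expR (- (l * m%:R)) *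
    ((expR l + expR (- l)) ^+ n + (expR (- l) + expR (- - l)) ^+ n)).
  by rewrite cosh_even; lra.
rewrite -!binomial_expR_sum -big_split mulr_sumr; apply: eq_bigr => k _.
by rewrite /= /w !expRD !mulNr; ring.
Qed.

Lemma binomial_tail_le n m : (0 < n)%N ->
  \sum_(k < n.+1 | (m < `|n%:Z - (2 * k)%:Z|)%N) ('C(n, k)%:R : R) <=
  2 * 2 ^+ n * expR (- m%:R ^+ 2 / (2 * n%:R)).
Proof.
move=> n_gt0; pose l : R := m%:R / n%:R.
have l_ge0 : 0 <= l by rewrite divr_ge0.
apply: le_trans (binomial_tail_le_expR l n m l_ge0) _.
have -> : - m%:R ^+ 2 / (2 * n%:R) = - (l * m%:R) + n%:R * (l ^+ 2 / 2).
  by rewrite /l; field; rewrite pnatr_eq0 -lt0n.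
rewrite [leRHS](_ : _ = 2 * expR (- (l * m%:R)) * (2 * expR (l ^+ 2 / 2)) ^+ n); last first.
  by rewrite expRD expRM_natl [(2 * _) ^+ n]exprMn; ring.
rewrite ler_wpM2l ?mulr_ge0 ?expR_ge0 // lerXn2r ?expR_add_expRN_le //.
all: by rewrite !nnegrE ?addr_ge0 ?mulr_ge0 ?expR_ge0.
Qed.

Fixpoint cheb (n : nat) : {poly R} :=
  if n is n1.+1 then
    if n1 is n2.+1 then 'X * cheb n1 *+ 2 - cheb n2 else 'X
  else 1.

Lemma cheb0 : cheb 0 = 1. Proof. by []. Qed.
Lemma cheb1 : cheb 1 = 'X. Proof. by []. Qed.
Lemma chebSS n : cheb n.+2 = 'X * cheb n.+1 *+ 2 - cheb n.
Proof. by []. Qed.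

Lemma size_cheb n : (size (cheb n) <= n.+1)%N.
Proof.
suff : (size (cheb n) <= n.+1)%N /\ (size (cheb n.+1) <= n.+2)%N by case.
elim: n => [|n [IHn IHn1]]; first by rewrite cheb0 cheb1 size_poly1 size_polyX.
split => //; rewrite chebSS.
apply: leq_trans (size_polyD _ _) _.
rewrite size_polyN geq_max (leq_trans IHn) ?andbT; last by lia.
rewrite mulr2n; apply: leq_trans (size_polyD _ _) _; rewrite maxnn.
by apply: leq_trans (size_polyMleq _ _) _; rewrite size_polyX; lia.
Qed.

Section ChebyshevValues.
Variable x : R.

Lemma horner_cheb0 : (cheb 0).[x] = 1.
Proof. by rewrite cheb0 hornerE. Qed.

Lemma horner_cheb1 : (cheb 1).[x] = x.
Proof. by rewrite cheb1 hornerX. Qed.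

Lemma horner_chebSS n :
  (cheb n.+2).[x] = 2 * x * (cheb n.+1).[x] - (cheb n).[x].
Proof. by rewrite chebSS !hornerE; ring. Qed.

(* The witness s is U_(n-1)(x), for U the Chebyshev polynomials of the second kind. *)
Lemma cheb_pell n : exists s,
  (cheb n).[x] ^+ 2 - (x ^+ 2 - 1) * s ^+ 2 = 1 /\
  (cheb n.+1).[x] = x * (cheb n).[x] + (x ^+ 2 - 1) * s.
Proof.
elim: n => [|n [s [pell_n next_n]]].
  by rewrite horner_cheb0 horner_cheb1; exists 0; split; ring.
exists ((cheb n).[x] + x * s); rewrite horner_chebSS next_n.
by split; [rewrite -[RHS]pell_n|]; ring.
Qed.

Lemma cheb_norm_le1 n : -1 <= x <= 1 -> `|(cheb n).[x]| <= 1.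
Proof.
move=> /andP[x_geN1 x_le1]; have [s [pell_n _]] := cheb_pell n.
rewrite -ler_sqr ?nnegrE // expr1n real_normK ?num_real //.
have : 0 <= (1 - x ^+ 2) * s ^+ 2 by rewrite mulr_ge0 ?sqr_ge0 //; nra.
nra.
Qed.

(* Indexing by |z| extends the three-term recurrence to every integer z, as T_(-1) = T_1. *)
Lemma cheb_absz_step (z : int) :
  (cheb `|z + 1|).[x] + (cheb `|z - 1|).[x] = 2 * x * (cheb `|z|).[x].
Proof.
case: z => [[|n]|n].
- by rewrite horner_cheb0 horner_cheb1; ring.
- have -> : absz (Posz n.+1 + 1) = n.+2 by lia.
  have -> : absz (Posz n.+1 - 1) = n by lia.
  by rewrite horner_chebSS; ring.
- have -> : absz (Negz n + 1) = n by lia.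
  have -> : absz (Negz n - 1) = n.+2 by lia.
  by rewrite horner_chebSS; ring.
Qed.

Lemma expr_cheb_expansion n :
  (2 * x) ^+ n = \sum_(k < n.+1) 'C(n, k)%:R * (cheb `|n%:Z - (2 * k)%:Z|).[x].
Proof.
elim: n => [|n IHn]; first by rewrite big_ord1 horner_cheb0 mulr1.
rewrite exprS IHn mulr_sumr.
under eq_bigr => k _ do rewrite mulrCA -cheb_absz_step mulrDr.
rewrite big_split [RHS]big_ord_recl bin0 mul1r.
under [in RHS]eq_bigr => k _ do rewrite binS natrD mulrDl.
rewrite big_split addrA; congr (_ + _); last first.
  by apply: eq_bigr => k _; congr (_ * (cheb _).[x]); rewrite /= /bump; lia.
rewrite [LHS]big_ord_recl [in RHS]big_ord_recr bin0 (bin_small (ltnSn n)).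
rewrite mul1r mul0r; congr (_ + _); first by congr (cheb _).[x]; rewrite /=; lia.
by rewrite Monoid.mulm1; apply: eq_bigr => k _; congr (_ * (cheb _).[x]); rewrite /= /bump; lia.
Qed.

End ChebyshevValues.

Definition cheb_trunc (n m : nat) : {poly R} :=
  (2 ^+ n)^-1 *: \sum_(k < n.+1 | (`|n%:Z - (2 * k)%:Z| <= m)%N)
                    'C(n, k)%:R *: cheb `|n%:Z - (2 * k)%:Z|.

Lemma size_cheb_trunc n m : (size (cheb_trunc n m) <= m.+1)%N.
Proof.
apply: leq_trans (size_scale_leq _ _) _.
apply: (big_ind (fun p : {poly R} => size p <= m.+1)%N) => [|p q|k k_le].
- by rewrite size_poly0.
- by move=> p_le q_le; apply: leq_trans (size_polyD _ _) _; rewrite geq_max p_le.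
- by apply: leq_trans (size_scale_leq _ _) _; exact: leq_trans (size_cheb _) _.
Qed.

Lemma cheb_trunc_err n m (x : R) : (0 < n)%N -> -1 <= x <= 1 ->
  `|x ^+ n - (cheb_trunc n m).[x]| <= 2 * expR (- m%:R ^+ 2 / (2 * n%:R)).
Proof.
move=> n_gt0 x_in; have two_n : (2 : R) ^+ n != 0 by rewrite expf_neq0 ?pnatr_eq0.
have -> : x ^+ n - (cheb_trunc n m).[x] = (2 ^+ n)^-1 *
    \sum_(k < n.+1 | (m < `|n%:Z - (2 * k)%:Z|)%N) 'C(n, k)%:R * (cheb `|n%:Z - (2 * k)%:Z|).[x].
  rewrite -[x ^+ n](mulKf two_n) -exprMn expr_cheb_expansion hornerZ horner_sum.
  rewrite (bigID (fun k : 'I_n.+1 => `|n%:Z - (2 * k)%:Z| <= m)%N) /= mulrDr.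
  under [in X in _ - X]eq_bigr do rewrite hornerZ.
  by rewrite addrAC subrr add0r; congr (_ * _); apply: eq_bigl => k; rewrite ltnNge.
rewrite normrM ger0_norm ?invr_ge0 ?exprn_ge0 // ler_pdivrMl ?exprn_gt0 //.
apply: le_trans (ler_norm_sum _ _ _) _.
apply: le_trans (_ : _ <= \sum_(k < n.+1 | (m < `|n%:Z - (2 * k)%:Z|)%N) 'C(n, k)%:R) _.
  apply: ler_sum => k _; rewrite normrM ger0_norm // -[leRHS]mulr1 ler_wpM2l //.
  exact: cheb_norm_le1.
by apply: le_trans (binomial_tail_le n m n_gt0) _; rewrite [leRHS]mulrCA mulrA.
Qed.

Lemma unif_err_set_nonempty n (p : {poly R}) :
  [set y : R | exists x : R, -1 <= x <= 1 /\ y = `|x ^+ n - p.[x]|] !=set0.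
Proof. by exists `|0 ^+ n - p.[0]|, 0; rewrite lerN10 ler01. Qed.

Lemma unif_err_ge0 n (p : {poly R}) : 0 <= unif_err n p.
Proof.
rewrite /unif_err; set S := [set y | _].
have [S_sup|/sup_out->//] := pselect (has_sup S).
have [y S_y] := unif_err_set_nonempty n p.
apply: le_trans (sup_upper_bound S_sup S_y).
by case: S_y => x [_ ->].
Qed.

Lemma unif_err_le n (p : {poly R}) (e : R) :
  (forall x, -1 <= x <= 1 -> `|x ^+ n - p.[x]| <= e) -> unif_err n p <= e.
Proof.
move=> err_le; apply: ge_sup (unif_err_set_nonempty n p) _.
by move=> _ [x [x_in ->]]; exact: err_le.
Qed.

Lemma Phi_ge0 n m : 0 <= Phi n m :> R.
Proof.
apply: lb_le_inf; last by move=> _ [p [_ ->]]; exact: unif_err_ge0.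
by exists (unif_err n (0 : {poly R})), 0; rewrite size_poly0.
Qed.

Lemma Phi_le_unif_err n m (p : {poly R}) : (size p <= m.+1)%N -> Phi n m <= unif_err n p.
Proof.
move=> size_p; apply: ge_inf; last by exists p.
by exists 0 => _ [r [_ ->]]; exact: unif_err_ge0.
Qed.

Lemma Phi_le n m : (0 < n)%N -> Phi n m <= 2 * expR (- m%:R ^+ 2 / (2 * n%:R)) :> R.
Proof.
move=> n_gt0; apply: le_trans (Phi_le_unif_err n m _ (size_cheb_trunc n m)) _.
by apply: unif_err_le => x; exact: cheb_trunc_err.
Qed.

Lemma Phi_sqr_le n m (q : R) : 0 < q -> (0 < n)%N -> n%:R <= m%:R ^+ 2 / q ->
  Phi n m ^+ 2 <= 4 * expR (- q).
Proof.
move=> q_gt0 n_gt0; rewrite ler_pdivlMr // => nq_le.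
have n_pos : (0 : R) < n%:R by rewrite ltr0n.
apply: le_trans (_ : _ <= (2 * expR (- m%:R ^+ 2 / (2 * n%:R))) ^+ 2) _.
  by rewrite lerXn2r ?nnegrE ?Phi_ge0 ?Phi_le // (le_trans (Phi_ge0 _ _) (Phi_le _ n_gt0)).
rewrite exprMn -expRM_natl (_ : 2 ^+ 2 = 4 :> R); last by rewrite expr2; lra.
rewrite ler_wpM2l // ler_expR (_ : 2%:R * _ = - (m%:R ^+ 2 / n%:R)); last first.
  by field; rewrite pnatr_eq0 -lt0n.
by rewrite lerN2 ler_pdivlMr // mulrC.
Qed.

End MonomialApproximation.

Theorem lemma2 (R : realType) (q : R) (m : nat) (hq : 0 < q) (hm : (1 <= m)%N) :
  \sum_(m <= n < (Num.truncn ((m%:R ^+ 2) / q)).+1) (Phi n m : R) ^+ 2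
    <= 4 * ((m%:R ^+ 2) / q) * expR (- q).
Proof.
set N := Num.truncn _.
have N_le : (N%:R : R) <= m%:R ^+ 2 / q by rewrite truncn_le divr_ge0 // ?ltW // exprn_ge0.
apply: le_trans (_ : _ <= \sum_(m <= n < N.+1) 4 * expR (- q)) _.
  rewrite big_nat_cond [leRHS]big_nat_cond; apply: ler_sum => n /andP[/andP[m_le n_lt] _].
  apply: Phi_sqr_le => //; first exact: leq_trans hm m_le.
  by apply: le_trans N_le; rewrite ler_nat -ltnS.
rewrite sumr_const_nat -[_ *+ _]mulr_natr [leRHS]mulrAC ler_wpM2l ?mulr_ge0 ?expR_ge0 //.
by apply: le_trans N_le; rewrite ler_nat; lia.
Qed.
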